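(* Let $G$ be an undirected, weighted, connected graph on vertices $1,\dots,n$, and let $H$ be either its adjacency matrix or its Laplacian matrix. For real $t$ let $p(t)=|\langle s|e^{itH}|r\rangle|^2$ be the fidelity of state transfer from a sender vertex $s$ to a receiver vertex $r$. Suppose there is perfect state transfer from $s$ to $r$ at time $t_0$, i.e. $p(t_0)=1$. Let $\lambda_1$ and $\lambda_n$ denote the smallest and largest eigenvalues of $H$, and let $h\in\mathbb{R}$ satisfy $|h|<\frac{\pi}{\lambda_n-\lambda_1}$. Then \[ p(t_0+h)\ \ge\ \frac14\left|e^{ih\lambda_1}+e^{ih\lambda_n}\right|^2 . \]
   Context: For a weighted graph with edge weights $w(j,k)$, the adjacency matrix $A=[a_{jk}]$ has $a_{jk}=w(j,k)$ if $j,k$ are adjacent and $a_{jk}=0$ otherwise; the Laplacian is $L=R-A$ where $R$ is the diagonal matrix of row sums of $A$. $\{|1\rangle,\dots,|n\rangle\}$ is the standard basis of $\mathbb{C}^n$, so $\langle s|e^{itH}|r\rangle$ is the $(s,r)$ entry of $e^{itH}$. *)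

From HB Require Import structures.
From mathcomp Require Import all_boot all_order all_algebra.
From mathcomp Require Import all_classical all_reals all_analysis.
From mathcomp Require Import complex.
Set Implicit Arguments. Unset Strict Implicit. Unset Printing Implicit Defensive.
Import Order.TTheory GRing.Theory Num.Theory.
Import numFieldTopology.Exports numFieldNormedType.Exports.
Local Open Scope ring_scope.
Local Open Scope classical_set_scope.

(* Topology on the complex numbers R[i] (R real closed): the metric topology
   induced by the complex modulus, as for any numFieldType. *)
HB.instance Definition _ (R : rcfType) := PseudoPointedMetric.copy R[i] (R[i])^o.

Section Defs.
Variables (R : realType) (n : nat).

Definition weighted_graph (e : rel 'I_n) (w : 'I_n -> 'I_n -> R) : Prop :=
  [/\ forall j k, e j k = e k j,
      forall j, ~~ e j j,
      forall j k, w j k = w k j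
    & forall j k, e j k -> 0 < w j k].

Definition connected_graph (e : rel 'I_n) : Prop :=
  forall j k : 'I_n, connect e j k.

Definition adjacency_mx (e : rel 'I_n) (w : 'I_n -> 'I_n -> R) : 'M[R]_n :=
  \matrix_(j, k) (if e j k then w j k else 0).

Definition laplacian_mx (e : rel 'I_n) (w : 'I_n -> 'I_n -> R) : 'M[R]_n :=
  diag_mx (\row_j (\sum_k adjacency_mx e w j k)) - adjacency_mx e w.

Definition cmx (H : 'M[R]_n) : 'M[R[i]]_n := map_mx (fun x => x%:C%C) H.

Definition expmx (M : 'M[R[i]]_n) : 'M[R[i]]_n :=
  \matrix_(j, k)
    lim ((fun N : nat => (\sum_(m < N) (m`!%:R)^-1 *: (M ^+ m)) j k) @ \oo).

Definition expi (x : R) : R[i] := (cos x +i* sin x)%C.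

Definition fidelity (H : 'M[R]_n) (s r : 'I_n) (t : R) : R :=
  Normc.normc (expmx (('i%C * t%:C%C) *: cmx H) s r) ^+ 2.

End Defs.

(* Diagonalise H = P^* D P with P unitary, so that <s|e^{itH}|r> is
   sum_l a_l e^{i t d_l} b_l for unit vectors a, b and the eigenvalues d_l.
   Perfect transfer at t0 is the equality case of Cauchy-Schwarz and forces
   e^{i t0 d_l} b_l = g conj(a_l) with |g| = 1, hence p(t0 + h) is the squared
   modulus of the convex combination sum_l |a_l|^2 e^{i h d_l} of points on an
   arc of length |h| (l_n - l_1) < pi.  Rotating the midpoint of the arc to 1,
   every real part is at least cos (h (l_n - l_1) / 2), which is half of
   |e^{i h l_1} + e^{i h l_n}|. *)

From HB Require Import structures.
From mathcomp Require Import all_boot all_order all_algebra.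
From mathcomp Require Import all_classical all_reals all_analysis.
From mathcomp Require Import complex.
From mathcomp Require Import ring lra.
Set Implicit Arguments. Unset Strict Implicit. Unset Printing Implicit Defensive.
Import Order.TTheory GRing.Theory Num.Theory.
Import numFieldTopology.Exports numFieldNormedType.Exports.
Local Open Scope ring_scope.
Local Open Scope classical_set_scope.

Section Expi.
Variable R : realType.
Local Open Scope complex_scope.

Lemma expiD (x y : R) : expi (x + y) = expi x * expi y.
Proof. by rewrite /expi /= cosD sinD; simpc; congr (_ +i* _); ring. Qed.

Lemma normc_expi (x : R) : Normc.normc (expi x) = 1.
Proof. by rewrite /expi /= cos2Dsin2 sqrtr1. Qed.

Lemma normc_ge0 (z : R[i]) : 0 <= Normc.normc z.
Proof. by case: z => a b; exact: sqrtr_ge0. Qed.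

Lemma normc_real (x : R) : Normc.normc x%:C = `|x|.
Proof. by rewrite /= expr0n /= addr0 sqrtr_sqr. Qed.

Lemma mul_conj_normc (z : R[i]) : z * z^* = (Normc.normc z ^+ 2)%:C.
Proof. by rewrite -normCK rmorphXn. Qed.

Lemma mul_conj_expi (x : R) : expi x * (expi x)^* = 1.
Proof. by rewrite mul_conj_normc normc_expi expr1n. Qed.

Lemma normc_expiD_expi (x y : R) :
  Normc.normc (expi x + expi y) = 2 * `|cos ((y - x) / 2)|.
Proof.
pose m := (x + y) / 2; pose e := (y - x) / 2.
have -> : expi x + expi y = expi m * (cos e *+ 2)%:C.
  have -> : x = m + - e by rewrite /m /e; field.
  have -> : y = m + e by rewrite /m /e; field.
  rewrite !expiD -mulrDr; congr (_ * _).
  by rewrite /expi cosN sinN; simpc; rewrite addNr -mulr2n.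
by rewrite Normc.normcM normc_expi mul1r normc_real normrMn mulr2n mulrDl mul1r.
Qed.

Lemma Re_le_normc (z : R[i]) : complex.Re z <= Normc.normc z.
Proof.
case: z => a b /=; apply: (le_trans (ler_norm a)).
by rewrite -sqrtr_sqr ler_sqrt ?lerDl ?sqr_ge0 // addr_ge0 ?sqr_ge0.
Qed.

Lemma Re_sum (I : finType) (F : I -> R[i]) :
  complex.Re (\sum_i F i) = \sum_i complex.Re (F i).
Proof. by apply: (big_morph (@complex.Re R)) => // -[a b] [c d]. Qed.

End Expi.

Section ExpiSeries.
Variable R : realType.
Local Open Scope complex_scope.

Lemma expi_series_term (x : R) (m : nat) :
  (m`!%:R)^-1 * ('i * x%:C) ^+ m = (cos_coeff x m)%:C + 'i * (sin_coeff x m)%:C.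
Proof.
have [k [->|->]] : exists k, m = k.*2 \/ m = k.*2.+1.
  by exists m./2; rewrite -{1 3}[m]odd_double_half; case: odd; [right|left].
- rewrite sin_coeff_even rmorph0 mulr0 addr0 /cos_coeff /=.
  rewrite odd_double doubleK /= mul1r -exprnP exprMn -rmorphXn /= -mul2n.
  rewrite exprM sqr_i !rmorphM /= fmorphV /= rmorph_nat !rmorphXn /= rmorphN1.
  by rewrite mulrC.
- rewrite cos_coeff_odd rmorph0 add0r /sin_coeff /=.
  rewrite odd_double /= doubleK mul1r exprMn -rmorphXn /= exprS -mul2n exprM.
  rewrite sqr_i !rmorphM /= fmorphV /= rmorph_nat !rmorphXn /= rmorphN1.
  by rewrite mulrC !mulrA.
Qed.

Lemma cvg_real_complex (u : nat -> R) (l : R) :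
  u @ \oo --> l -> (fun N => (u N)%:C : (R[i])^o) @ \oo --> (l%:C : (R[i])^o).
Proof.
move=> /cvgrPdist_lt ul; apply/cvgrPdist_lt => eps eps0.
have := eps0; rewrite ltcE /= => /andP[/eqP Ie Re0].
have -> : eps = (complex.Re eps)%:C by move: Ie; case: (eps) => a b /= ->.
near=> N; have : `|l - u N| < complex.Re eps by near: N; exact: ul.
by rewrite -rmorphB /= normc_def /= expr0n /= addr0 sqrtr_sqr ltcR.
Unshelve. all: end_near.
Qed.

Lemma cvg_expi_series (x : R) :
  (fun N => \sum_(m < N) (m`!%:R)^-1 * ('i * x%:C) ^+ m : (R[i])^o) @ \oo -->
  (expi x : (R[i])^o).
Proof.
have -> : (fun N => \sum_(m < N) (m`!%:R)^-1 * ('i * x%:C) ^+ m : (R[i])^o) =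
  (fun N => (series (cos_coeff x) N)%:C + 'i * (series (sin_coeff x) N)%:C).
  apply/funext => N; rewrite /series /= !big_mkord !rmorph_sum /= mulr_sumr.
  by rewrite -big_split; apply: eq_bigr => m _; rewrite expi_series_term.
have -> : expi x = (cos x)%:C + 'i * (sin x)%:C by rewrite /expi; simpc.
apply: cvgD; first by apply: cvg_real_complex; rewrite cos.unlock;
  exact: is_cvg_series_cos_coeff.
apply: cvgMl_tmp; apply: cvg_real_complex.
by rewrite sin.unlock; exact: is_cvg_series_sin_coeff.
Qed.

End ExpiSeries.

Lemma cvg_big_sum (K : numFieldType) (V : normedModType K) (I : finType)
    (f : I -> nat -> V) (a : I -> V) :
  (forall i, f i @ \oo --> a i) -> (fun N => \sum_i f i N) @ \oo --> \sum_i a i.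
Proof.
move=> fa; have -> : (fun N => \sum_i f i N) = \sum_i f i.
  by apply/funext => N; rewrite fct_sumE.
apply: (big_ind2 (fun (g : nat -> V) (b : V) => g @ \oo --> b)) => //.
- exact: cvg_cst.
- by move=> g1 b1 g2 b2; apply: cvgD.
Qed.

Section ConjugateDiagonal.
Variables (F : fieldType) (n : nat) (P : 'M[F]_n).
Hypothesis P_unit : P \in unitmx.

Lemma conj_diag_mx_exp (v : 'rV[F]_n) m :
  (invmx P *m diag_mx v *m P) ^+ m = invmx P *m diag_mx (\row_l v 0 l ^+ m) *m P.
Proof.
elim: m => [|m IHm].
  have -> : \row_l v 0 l ^+ 0 = const_mx 1 by apply/rowP => l; rewrite !mxE.
  by rewrite expr0 diag_const_mx mulmx1 mulVmx.
rewrite exprS -mulmxE IHm !mulmxA -[_ *m P *m invmx P]mulmxA mulmxV // mulmx1.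
rewrite -[_ *m diag_mx v *m _]mulmxA mulmx_diag; congr (_ *m diag_mx _ *m _).
by apply/rowP => l; rewrite !mxE exprS.
Qed.

Lemma eigenvalue_conj_diag (v : 'rV[F]_n) l :
  eigenvalue (invmx P *m diag_mx v *m P) (v 0 l).
Proof.
apply/eigenvalueP; exists (row l P).
  rewrite !mulmxA -!row_mul mulmxV // mul1mx mul_diag_mx.
  by apply/rowP => k; rewrite !mxE.
apply/negP => /eqP Pl0.
have : row l (P *m invmx P) = 0 by rewrite row_mul Pl0 mul0mx.
by rewrite mulmxV // => /rowP /(_ l) /eqP; rewrite !mxE eqxx oner_eq0.
Qed.

Lemma exp_partial_sum_conj_diag (v : 'rV[F]_n) (c : F) N j k :
  (\sum_(m < N) (m`!%:R)^-1 *: ((c *: (invmx P *m diag_mx v *m P)) ^+ m)) j k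
  = \sum_l invmx P j l * (\sum_(m < N) (m`!%:R)^-1 * (c * v 0 l) ^+ m) * P l k.
Proof.
have -> : c *: (invmx P *m diag_mx v *m P) =
          invmx P *m diag_mx (\row_l (c * v 0 l)) *m P.
  rewrite scalemxAl scalemxAr; congr (_ *m _ *m _).
  by apply/matrixP => a b; rewrite !mxE mulrnAr.
rewrite summxE; under eq_bigr do rewrite mxE conj_diag_mx_exp mxE mulr_sumr.
rewrite exchange_big /=; apply: eq_bigr => l _.
rewrite mulr_sumr mulr_suml; apply: eq_bigr => m _.
by rewrite mul_mx_diag !mxE !mulrA [_^-1 * _]mulrC.
Qed.

End ConjugateDiagonal.

Lemma expmx_conj_diag (R : realType) (n : nat) (P : 'M[R[i]]_n) (d : 'I_n -> R)
    (t : R) j k :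
  P \in unitmx ->
  expmx (('i%C * t%:C%C) *: (invmx P *m diag_mx (\row_l (d l)%:C%C) *m P)) j k =
  \sum_l invmx P j l * expi (t * d l) * P l k.
Proof.
move=> P_unit; rewrite mxE; apply: (@cvg_lim _ (@norm_hausdorff _ (R[i])^o)) => //.
under eq_fun do rewrite exp_partial_sum_conj_diag //.
apply: cvg_big_sum => l; apply: cvgMr_tmp; apply: cvgMl_tmp.
rewrite mxE -mulrA -rmorphM.
exact: cvg_expi_series.
Qed.

Section Spectral.
Variables (R : realType) (n : nat).
Local Open Scope complex_scope.

Lemma adjacency_mx_sym (e : rel 'I_n) (w : 'I_n -> 'I_n -> R) :
  (forall j k, e j k = e k j) -> (forall j k, w j k = w k j) ->
  (adjacency_mx e w)^T = adjacency_mx e w.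
Proof. by move=> esym wsym; apply/matrixP => j k; rewrite !mxE esym wsym. Qed.

Lemma laplacian_mx_sym (e : rel 'I_n) (w : 'I_n -> 'I_n -> R) :
  (forall j k, e j k = e k j) -> (forall j k, w j k = w k j) ->
  (laplacian_mx e w)^T = laplacian_mx e w.
Proof.
by move=> esym wsym; rewrite /laplacian_mx linearB /= tr_diag_mx adjacency_mx_sym.
Qed.

Lemma symmetric_spectral (H : 'M[R]_n) : H^T = H ->
  exists2 P : 'M[R[i]]_n, P \is unitarymx & exists d : 'I_n -> R,
    cmx H = invmx P *m diag_mx (\row_l (d l)%:C) *m P /\
    forall l, eigenvalue H (d l).
Proof.
move=> Hsym; pose A := cmx H.
have A_herm : A \is hermsymmx.
  apply: realsym_hermsym.
    by apply/is_hermitianmxP; rewrite expr0 scale1r map_mx_id // /A /cmx map_trmx Hsym.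
  by apply/mxOverP => j k; rewrite mxE realE !lecE /= eqxx le_total.
have /mxOverP D_real := hermitian_spectral_diag_real A_herm.
pose d l := complex.Re (spectral_diag A 0 l).
have Dd : spectral_diag A = \row_l (d l)%:C.
  by apply/rowP => l; rewrite mxE RRe_real ?D_real.
have AE : A = invmx (spectralmx A) *m diag_mx (\row_l (d l)%:C) *m spectralmx A.
  by rewrite -Dd; apply/orthomx_spectralP; exact: hermitian_normalmx.
exists (spectralmx A); first exact: spectral_unitarymx.
exists d; split => // l; rewrite -(eigenvalue_map (real_complex R)).
have := eigenvalue_conj_diag (spectral_unit A) (\row_l (d l)%:C) l.
by rewrite -AE mxE.
Qed.

Lemma fidelity_spectral (H : 'M[R]_n) (s r : 'I_n) : H^T = H ->
  exists a b : 'I_n -> R[i], exists2 d : 'I_n -> R,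
    \sum_l a l * (a l)^* = 1 /\ \sum_l b l * (b l)^* = 1 &
    (forall l, eigenvalue H (d l)) /\
    forall t, fidelity H s r t = Normc.normc (\sum_l a l * expi (t * d l) * b l) ^+ 2.
Proof.
move=> /symmetric_spectral [P P_unitary [d [HE d_eig]]].
have P_unit := unitarymx_unit P_unitary.
have invPE j l : invmx P j l = (P l j)^* by rewrite invmx_unitary // !mxE.
have invPP j : \sum_l invmx P j l * P l j = 1.
  by move/matrixP/(_ j j): (mulVmx P_unit); rewrite !mxE eqxx.
exists (fun l => invmx P s l), (fun l => P l r), d; split => //.
- by rewrite -(invPP s); apply: eq_bigr => l _; rewrite invPE conjCK.
- by rewrite -(invPP r); apply: eq_bigr => l _; rewrite invPE mulrC.
- by move=> t; rewrite /fidelity HE expmx_conj_diag.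
Qed.

End Spectral.

Section Estimates.
Variable R : realType.
Local Open Scope complex_scope.

Lemma unit_dot_eq1_conj (I : finType) (a c : I -> R[i]) :
  \sum_i a i * (a i)^* = 1 -> \sum_i c i * (c i)^* = 1 ->
  (\sum_i a i * c i) * (\sum_i a i * c i)^* = 1 ->
  forall i, c i = (\sum_j a j * c j) * (a i)^*.
Proof.
move=> a1 c1; set g := \sum_j a j * c j => g1.
pose z i := c i - g * (a i)^*.
have : \sum_i z i * (z i)^* = 0.
  have -> : \sum_i z i * (z i)^* = \sum_i (c i * (c i)^* - g^* * (a i * c i)
      - g * (a i * c i)^* + g * g^* * (a i * (a i)^*)).
    by apply: eq_bigr => i _; rewrite /z !rmorphB !rmorphM /= conjCK; ring.
  rewrite big_split /= !sumrB -!mulr_sumr -rmorph_sum /= a1 c1 -/g.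
  by rewrite [g^* * g]mulrC g1; ring.
move=> /psumr_eq0P z0 i; have /eqP := z0 (fun i _ => mul_conjC_ge0 (z i)) i isT.
by rewrite -normCK sqrf_eq0 normr_eq0 subr_eq0 => /eqP.
Qed.

Lemma ler_cos : {in `[0, pi]%R &, {mono (@cos R) : x y /~ y <= x}}.
Proof. by move=> x y x_itv y_itv; rewrite !leNgt (ltr_cos y_itv x_itv). Qed.

Lemma cos_le_normc_convex_expi (I : finType) (w d : I -> R) (h a b : R) :
  (forall i, 0 <= w i) -> \sum_i w i = 1 -> (forall i, a <= d i <= b) ->
  `|h| * (b - a) <= pi ->
  cos (h * (b - a) / 2) <= Normc.normc (\sum_i (w i)%:C * expi (h * d i)).
Proof.
move=> w0 w1 dab hpi; pose m := (a + b) / 2.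
have -> : \sum_i (w i)%:C * expi (h * d i) =
          expi (h * m) * \sum_i (w i)%:C * expi (h * (d i - m)).
  rewrite mulr_sumr; apply: eq_bigr => i _.
  by rewrite mulrCA -expiD; congr (_ * expi _); ring.
rewrite Normc.normcM normc_expi mul1r; apply: le_trans (Re_le_normc _).
rewrite Re_sum -[cos _]mul1r -{1}w1 mulr_suml; apply: ler_sum => i _.
rewrite /expi /=; simpc; apply: ler_wpM2l => //.
have /andP[adi dib] := dab i; have pi_ge0 : 0 <= pi := ltW (pi_gt0 R).
have half_ge0 : 0 <= (b - a) / 2 by rewrite divr_ge0 //; lra.
have th_le_pi : `|h| * ((b - a) / 2) <= pi by rewrite mulrA; lra.
have arc : `|h * (d i - m)| <= `|h| * ((b - a) / 2).
  by rewrite normrM ler_wpM2l // ler_norml /m; lra.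
rewrite -cos_norm -mulrA normrM (ger0_norm half_ge0) -[cos (h * _)]cos_norm.
by rewrite ler_cos ?in_itv /= ?normr_ge0 ?(mulr_ge0 (normr_ge0 h) half_ge0) ?th_le_pi
  ?(le_trans arc th_le_pi).
Qed.

Lemma pst_fidelity_lower_bound (I : finType) (a b : I -> R[i]) (d : I -> R)
    (t0 h l1 ln : R) :
  \sum_i a i * (a i)^* = 1 -> \sum_i b i * (b i)^* = 1 ->
  (forall i, l1 <= d i <= ln) -> l1 <= ln -> `|h| * (ln - l1) <= pi ->
  Normc.normc (\sum_i a i * expi (t0 * d i) * b i) ^+ 2 = 1 ->
  4^-1 * Normc.normc (expi (h * l1) + expi (h * ln)) ^+ 2 <=
  Normc.normc (\sum_i a i * expi ((t0 + h) * d i) * b i) ^+ 2.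
Proof.
move=> a1 b1 dl l1ln hpi pst.
set g := \sum_i a i * expi (t0 * d i) * b i in pst.
have g1 : g * g^* = 1 by rewrite mul_conj_normc pst.
have phase i : expi (t0 * d i) * b i = g * (a i)^*.
  have -> : g = \sum_j a j * (expi (t0 * d j) * b j).
    by apply: eq_bigr => j _; rewrite mulrA.
  apply: unit_dot_eq1_conj => //.
    by rewrite -b1; apply: eq_bigr => j _; rewrite rmorphM /= mulrACA mul_conj_expi mul1r.
  by rewrite /g in g1; under eq_bigr do rewrite mulrA.
pose w i := Normc.normc (a i) ^+ 2.
have w1 : \sum_i w i = 1.
  apply: (@complexI R); rewrite rmorph_sum rmorph1 /= -a1.
  by apply: eq_bigr => i _; rewrite mul_conj_normc.
have shift : \sum_i a i * expi ((t0 + h) * d i) * b i =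
             g * \sum_i (w i)%:C * expi (h * d i).
  rewrite mulr_sumr; apply: eq_bigr => i _.
  rewrite mulrDl expiD -mulrA [expi (t0 * d i) * _]mulrC -mulrA phase.
  by rewrite -mul_conj_normc; ring.
have normc_g : Normc.normc g = 1 by apply/eqP; rewrite -sqrp_eq1 ?pst ?normc_ge0.
have cos_ge0 : 0 <= cos (h * (ln - l1) / 2).
  apply: cos_ge0_pihalf; rewrite -ler_norml -mulrA normrM.
  by rewrite [`|(ln - l1) / 2|]ger0_norm ?divr_ge0 ?subr_ge0 // mulrA; lra.
rewrite shift Normc.normcM normc_g mul1r normc_expiD_expi -mulrBr ger0_norm //.
rewrite exprMn mulrA (_ : 4^-1 * 2 ^+ 2 = 1) ?mul1r; last by field.
rewrite ler_pXn2r ?nnegrE ?normc_ge0 //.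
apply: cos_le_normc_convex_expi => // i; exact: sqr_ge0.
Qed.

End Estimates.

Theorem theorem2p1 (R : realType) (n : nat) (e : rel 'I_n)
    (w : 'I_n -> 'I_n -> R) (H : 'M[R]_n) (s r : 'I_n) (t0 h l1 ln : R) :
  weighted_graph e w ->
  connected_graph e ->
  (H = adjacency_mx e w \/ H = laplacian_mx e w) ->
  fidelity H s r t0 = 1 ->
  eigenvalue H l1 -> eigenvalue H ln ->
  (forall a : R, eigenvalue H a -> l1 <= a <= ln) ->
  `|h| * (ln - l1) < pi ->
  fidelity H s r (t0 + h) >= 4^-1 * Normc.normc (expi (h * l1) + expi (h * ln))%C ^+ 2.
Proof.
move=> [e_sym _ w_sym _] _ H_graph pst _ ln_eig spectrum hpi.
have H_sym : H^T = H.
  by case: H_graph => ->; [exact: adjacency_mx_sym | exact: laplacian_mx_sym].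
have [a [b [d [a1 b1] [d_eig fidE]]]] := fidelity_spectral s r H_sym.
have /andP[l1_le_ln _] := spectrum ln ln_eig.
rewrite !fidE in pst *; apply: pst_fidelity_lower_bound pst => //.
- by move=> l; apply/spectrum/d_eig.
- exact: ltW.
Qed.
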